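(* Let $(G,\precsim)$ be a compatible quasi-ordered abelian group and $H$ a $\precsim$-convex subgroup of $G$. Then for all $g_1,g_2\in G$ with $g_1-g_2\notin H$ and $g_1\precsim g_2$, and all $h_1,h_2\in H$, we have $g_1+h_1\precsim g_2+h_2$. Consequently the relation on $G/H$ defined by $g+H\precsim h+H\Leftrightarrow g-h\in H\vee(g-h\notin H\wedge g\precsim h)$ is a well-defined total quasi-order on $G/H$; moreover $(G/H,\precsim)$ is again a compatible quasi-ordered abelian group, and the canonical projection $G\to G/H$ is a homomorphism of quasi-ordered groups.
   Context: A compatible quasi-ordered abelian group is an abelian group $G$ with a total quasi-order $\precsim$ (reflexive, transitive, any two elements comparable) such that, writing $a\sim b$ for $a\precsim b\wedge b\precsim a$: $(Q_1)$ $x\sim0\Rightarrow x=0$; $(Q_2)$ $x\precsim y\wedge y\not\sim z\Rightarrow x+z\precsim y+z$, for all $x,y,z$. $S$ is $\precsim$-convex if $s,t\in S$, $s\precsim a\precsim t$ imply $a\in S$. A homomorphism of quasi-ordered groups is a group homomorphism $\phi$ with $g_1\precsim g_2\Rightarrow\phi(g_1)\precsim\phi(g_2)$. *)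

From mathcomp Require Import all_boot all_algebra.
Set Implicit Arguments. Unset Strict Implicit. Unset Printing Implicit Defensive.
Import GRing.Theory.
Local Open Scope ring_scope.

Definition total_quasi_order (T : Type) (le : T -> T -> Prop) : Prop :=
  (forall x, le x x) /\
  (forall x y z, le x y -> le y z -> le x z) /\
  (forall x y, le x y \/ le y x).

Definition qsim (T : Type) (le : T -> T -> Prop) (x y : T) : Prop :=
  le x y /\ le y x.

Definition cqoag (G : zmodType) (le : G -> G -> Prop) : Prop :=
  total_quasi_order le /\
  (forall x, qsim le x 0 -> x = 0) /\
  (forall x y z, le x y -> ~ qsim le y z -> le (x + z) (y + z)).

Definition is_subgroup (G : zmodType) (H : G -> Prop) : Prop :=
  H 0 /\ (forall x y, H x -> H y -> H (x - y)).

Definition qconvex (T : Type) (le : T -> T -> Prop) (S : T -> Prop) : Prop :=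
  forall s t a, S s -> S t -> le s a -> le a t -> S a.

Definition qo_hom (G Q : zmodType) (leG : G -> G -> Prop) (leQ : Q -> Q -> Prop)
  (f : G -> Q) : Prop :=
  (forall x y, f (x + y) = f x + f y) /\
  (forall x y, leG x y -> leQ (f x) (f y)).

Definition rep_rel (G : zmodType) (le : G -> G -> Prop) (H : G -> Prop) (g h : G) : Prop :=
  H (g - h) \/ (~ H (g - h) /\ le g h).

(* the induced relation on a quotient Q of G presented by pi : G -> Q *)
Definition quot_rel (G Q : zmodType) (le : G -> G -> Prop) (H : G -> Prop)
  (pi : G -> Q) (a b : Q) : Prop :=
  exists g h, pi g = a /\ pi h = b /\ rep_rel le H g h.

From mathcomp Require Import all_boot all_algebra.
From Stdlib Require Import Classical.
Import GRing.Theory.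
Local Open Scope ring_scope.

(** Everything rests on one convexity fact: an element outside the convex
    subgroup H that lies below (above) some element of H lies below (above)
    all of H, and is never equivalent to an element of H. Hence axiom (Q2)
    can be used to add h ∈ H to either side of [g1 ≾ g2] except when
    [g2 ~ -g2], a case treated separately. Once translation by H is
    harmless, the relation on representatives is independent of the
    choice of representatives, and the axioms descend to G/H. *)

Section CompatibleQuasiOrder.

Variables (G : zmodType) (le : G -> G -> Prop).
Hypothesis hG : cqoag le.

Lemma qo_trans {x y z} : le x y -> le y z -> le x z.
Proof. by case: hG => [[_ [tr _]] _]; apply: tr. Qed.

Lemma qo_total x y : le x y \/ le y x.
Proof. by case: hG => [[_ []]]. Qed.

Lemma qsim0_eq0 {x} : le x 0 -> le 0 x -> x = 0.
Proof. by case: hG => [_ [q1 _]] x_le0 x_ge0; apply: q1. Qed.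

Lemma qo_addr {x y z} : le x y -> ~ qsim le y z -> le (x + z) (y + z).
Proof. by case: hG => [_ [_ q2]]; apply: q2. Qed.

Lemma le0_addl {x} z : le x 0 -> le (x + z) z.
Proof.
move=> x_le0; have [->|z_neq0] := eqVneq z 0; first by rewrite addr0.
rewrite -[z in le _ z]add0r; apply: qo_addr => // -[z_ge0 z_le0].
by move/eqP: z_neq0; apply; apply: qsim0_eq0.
Qed.

Lemma le0_oppr_ge0 {x} : le x 0 -> le 0 (- x).
Proof. by move=> x_le0; have := le0_addl (- x) x_le0; rewrite subrr. Qed.

Lemma ge0_oppr_le0 {x} : le 0 x -> ~ qsim le x (- x) -> le (- x) 0.
Proof. by move=> x_ge0 nsim; have := qo_addr x_ge0 nsim; rewrite add0r subrr. Qed.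

Section ConvexSubgroup.

Variable H : G -> Prop.
Hypotheses (hH : is_subgroup H) (hconv : qconvex le H).

Lemma subg0 : H 0. Proof. by case: hH. Qed.

Lemma subgB {x y} : H x -> H y -> H (x - y). Proof. by case: hH => _; apply. Qed.

Lemma subgN {x} : H x -> H (- x).
Proof. by move=> hx; have := subgB subg0 hx; rewrite add0r. Qed.

Lemma subgD {x y} : H x -> H y -> H (x + y).
Proof. by move=> hx hy; have := subgB hx (subgN hy); rewrite opprK. Qed.

Lemma notsubgD {x h} : ~ H x -> H h -> ~ H (x + h).
Proof. by move=> nx hh hxh; apply: nx; have := subgB hxh hh; rewrite addrK. Qed.

Lemma notsubgN {x} : ~ H x -> ~ H (- x).
Proof. by move=> nx /subgN; rewrite opprK. Qed.

Lemma subg_diffxx x : H (x - x). Proof. by rewrite subrr; apply: subg0. Qed.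

Lemma subg_diff_sym {x y} : H (x - y) -> H (y - x).
Proof. by move=> /subgN; rewrite opprB. Qed.

Lemma not_qsim_out_in {x h} : ~ H x -> H h -> ~ qsim le x h.
Proof. by move=> nx hh [xh hx]; apply: nx; apply: (hconv _ _ _ hh hh). Qed.

Lemma not_qsim_in_out {h x} : H h -> ~ H x -> ~ qsim le h x.
Proof. by move=> hh nx [hx xh]; apply: (not_qsim_out_in nx hh). Qed.

Lemma outside_le {x s t} : ~ H x -> H s -> H t -> le x s -> le x t.
Proof.
move=> nx hs ht xs; have [//|tx] := qo_total x t.
by case: nx; apply: (hconv _ _ _ ht hs).
Qed.

Lemma outside_ge {x s t} : ~ H x -> H s -> H t -> le s x -> le t x.
Proof.
move=> nx hs ht sx; have [xt|//] := qo_total x t.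
by case: nx; apply: (hconv _ _ _ hs ht).
Qed.

Lemma qsim_opp_le_addr {y h} : ~ H y -> qsim le y (- y) -> H h -> le y (y + h).
Proof.
move=> ny [y_le_ny ny_le_y] hh.
have [h_ge0|h_le0] := qo_total 0 h.
  by have := qo_addr h_ge0 (not_qsim_in_out hh ny); rewrite add0r addrC.
have ny_le : le (- y) (- (y + h)).
  have := qo_addr (le0_oppr_ge0 h_le0) (not_qsim_in_out (subgN hh) (notsubgN ny)).
  by rewrite add0r -opprD addrC.
set w := y + h in ny_le *.
suff : le (- w) w by apply: qo_trans (qo_trans y_le_ny ny_le).
have [[_ //]|nsim] := classic (qsim le w (- w)).
have w_ge0 : le 0 w.
  have [//|w_le0] := qo_total 0 w.
  have y_le_nh : le y (- h) by have := le0_addl (- h) w_le0; rewrite /w addrK.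
  have y_le0 := outside_le ny (subgN hh) subg0 y_le_nh.
  suff y_ge0 : le 0 y by case: ny; rewrite (qsim0_eq0 y_le0 y_ge0); apply: subg0.
  by have := le0_addl y (qo_trans ny_le_y y_le0); rewrite addNr.
exact: qo_trans (ge0_oppr_le0 w_ge0 nsim) w_ge0.
Qed.

Lemma le_addr_subg {g1 g2 h} : ~ H (g1 - g2) -> le g1 g2 -> H h -> le g1 (g2 + h).
Proof.
move=> nd g12 hh.
have [hg2|ng2] := classic (H g2).
  have ng1 : ~ H g1 by move=> hg1; apply: nd; apply: subgB.
  exact: outside_le ng1 hg2 (subgD hg2 hh) g12.
have [d_le_h|h_le_d] := qo_total (g1 - g2) h.
  by have := qo_addr d_le_h (not_qsim_in_out hh ng2); rewrite subrK addrC.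
have d_ge0 : le 0 (g1 - g2) := outside_ge nd hh subg0 h_le_d.
suff sim2 : qsim le g2 (- g2) by exact: qo_trans g12 (qsim_opp_le_addr ng2 sim2 hh).
have [//|nsim] := classic (qsim le g2 (- g2)).
have d_le0 : le (g1 - g2) 0 by have := qo_addr g12 nsim; rewrite subrr.
by case: nd; rewrite (qsim0_eq0 d_le0 d_ge0); apply: subg0.
Qed.

Lemma le_addl_subg {g1 g2 h} : ~ H (g1 - g2) -> le g1 g2 -> H h -> le (g1 + h) g2.
Proof.
move=> nd g12 hh.
have [hg2|ng2] := classic (H g2).
  have ng1 : ~ H g1 by move=> hg1; apply: nd; apply: subgB.
  have g1h_le_h := le0_addl h (outside_le ng1 hg2 subg0 g12).
  exact: outside_le (notsubgD ng1 hh) hh hg2 g1h_le_h.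
have ng2h : ~ H (g2 - h) := notsubgD ng2 (subgN hh).
by have := qo_addr (le_addr_subg nd g12 (subgN hh)) (not_qsim_out_in ng2h hh);
  rewrite subrK.
Qed.

Lemma le_add_subg {g1 g2 h1 h2} : ~ H (g1 - g2) -> le g1 g2 -> H h1 -> H h2 ->
  le (g1 + h1) (g2 + h2).
Proof.
move=> nd g12 hh1 hh2; apply: (le_addr_subg _ (le_addl_subg nd g12 hh1) hh2).
by rewrite addrAC; apply: notsubgD.
Qed.

Lemma rep_rel_refl x : rep_rel le H x x.
Proof. by left; apply: subg_diffxx. Qed.

Lemma rep_rel_of_le {x y} : le x y -> rep_rel le H x y.
Proof. by move=> xy; have [|] := classic (H (x - y)); [left | right]. Qed.

Lemma rep_rel_total x y : rep_rel le H x y \/ rep_rel le H y x.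
Proof.
have [hxy|_] := classic (H (x - y)); first by left; left.
by have [] := qo_total x y; [left | right]; apply: rep_rel_of_le.
Qed.

Lemma rep_rel_congr {g h g' h'} : H (g' - g) -> H (h' - h) ->
  rep_rel le H g h -> rep_rel le H g' h'.
Proof.
move=> hg hh.
have E : g' - h' = (g - h) + ((g' - g) - (h' - h)).
  by rewrite addrACA -opprD !subrKC.
case=> [hgh|[ngh gh]]; [left | right]; rewrite E.
  by apply: subgD => //; apply: subgB.
split; first by apply: notsubgD => //; apply: subgB.
by have := le_add_subg ngh gh hg hh; rewrite !subrKC.
Qed.

Lemma rep_rel_trans {y x z} : rep_rel le H x y -> rep_rel le H y z -> rep_rel le H x z.
Proof.
move=> rxy ryz; case: (ryz) => [hyz|[_ yz]].
  by apply: rep_rel_congr rxy; [apply: subg_diffxx | apply: subg_diff_sym].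
case: rxy => [hxy|[_ xy]]; first by apply: rep_rel_congr ryz => //; apply: subg_diffxx.
exact: rep_rel_of_le (qo_trans xy yz).
Qed.

Section Quotient.

Variables (Q : zmodType) (pi : G -> Q).
Hypotheses (piD : forall x y, pi (x + y) = pi x + pi y)
  (pi_surj : forall q, exists g, pi g = q) (pi_ker : forall g, pi g = 0 <-> H g).

Lemma pi0 : pi 0 = 0.
Proof. by apply: (addrI (pi 0)); rewrite -piD !addr0. Qed.

Lemma piB x y : pi (x - y) = pi x - pi y.
Proof. by apply: (addIr (pi y)); rewrite -piD !subrK. Qed.

Lemma pi_eq_subg {g g'} : pi g = pi g' -> H (g' - g).
Proof. by move=> e; apply/pi_ker; rewrite piB e subrr. Qed.

Lemma rep_rel_pi {g h g' h'} : pi g = pi g' -> pi h = pi h' ->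
  rep_rel le H g h <-> rep_rel le H g' h'.
Proof.
move=> eg eh; split; apply: rep_rel_congr; apply: pi_eq_subg; by [rewrite eg | rewrite eh].
Qed.

Lemma quot_relE g h : quot_rel le H pi (pi g) (pi h) <-> rep_rel le H g h.
Proof.
split=> [[g0 [h0 [eg [eh r]]]]|r]; last by exists g, h.
exact: proj1 (rep_rel_pi eg eh) r.
Qed.

Lemma quot_rel_total_quasi_order : total_quasi_order (quot_rel le H pi).
Proof.
split; [|split].
- by move=> a; have [g <-] := pi_surj a; apply/quot_relE; apply: rep_rel_refl.
- move=> a b c; have [g <-] := pi_surj a; have [h <-] := pi_surj b.
  have [k <-] := pi_surj c.
  by move=> /quot_relE ghr /quot_relE hkr; apply/quot_relE; apply: rep_rel_trans ghr hkr.
- move=> a b; have [g <-] := pi_surj a; have [h <-] := pi_surj b.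
  by have [] := rep_rel_total g h; [left | right]; apply/quot_relE.
Qed.

Lemma quot_rel_cqoag : cqoag (quot_rel le H pi).
Proof.
split; first exact: quot_rel_total_quasi_order.
split.
- move=> a; have [g <-] := pi_surj a; case; rewrite -pi0.
  move=> /quot_relE g_le0 /quot_relE g_ge0; rewrite pi0; apply/pi_ker.
  case: g_le0 => [|[_ g_le0]]; first by rewrite subr0.
  case: g_ge0 => [/subgN|[_ g_ge0]]; first by rewrite sub0r opprK.
  by rewrite (qsim0_eq0 g_le0 g_ge0); apply: subg0.
- move=> a b c; have [g <-] := pi_surj a; have [h <-] := pi_surj b.
  have [k <-] := pi_surj c.
  move=> /quot_relE ghr nsim; rewrite -!piD; apply/quot_relE.
  have E : (g + k) - (h + k) = g - h by rewrite opprD addrACA subrr addr0.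
  case: ghr => [hgh|[ngh gh]]; [left | right]; rewrite E //; split=> //.
  apply: (qo_addr (z := k) gh) => -[hk kh]; apply: nsim.
  by split; apply/quot_relE; apply: rep_rel_of_le.
Qed.

Lemma pi_qo_hom : qo_hom le (quot_rel le H pi) pi.
Proof. by split=> // x y /rep_rel_of_le /quot_relE. Qed.

End Quotient.

End ConvexSubgroup.

End CompatibleQuasiOrder.

Theorem mainTheorem9 (G : zmodType) (le : G -> G -> Prop) (H : G -> Prop)
  (hG : cqoag le) (hH : is_subgroup H) (hconv : qconvex le H) :
  (forall g1 g2 h1 h2 : G, ~ H (g1 - g2) -> le g1 g2 -> H h1 -> H h2 ->
     le (g1 + h1) (g2 + h2)) /\
  (forall (Q : zmodType) (pi : G -> Q),
     (forall x y, pi (x + y) = pi x + pi y) ->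
     (forall q : Q, exists g, pi g = q) ->
     (forall g, pi g = 0 <-> H g) ->
     (forall g h g' h', pi g = pi g' -> pi h = pi h' ->
        (rep_rel le H g h <-> rep_rel le H g' h')) /\
     total_quasi_order (quot_rel le H pi) /\
     cqoag (quot_rel le H pi) /\
     qo_hom le (quot_rel le H pi) pi).
Proof.
split=> [|Q pi piD pi_surj pi_ker]; first exact: le_add_subg.
split; first exact: rep_rel_pi.
split; first exact: quot_rel_total_quasi_order.
split; [exact: quot_rel_cqoag | exact: pi_qo_hom].
Qed.
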